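(* Let $k$ be a field, $E$ a $k$-vector space of dimension $n$, and $f\in\operatorname{End}_k(E)$ an endomorphism with annihilating (minimal) polynomial $x^n$. Let $e\in E$ be a vector with $f^{n-1}(e)\neq 0$. Then the generalized inverses $g\in\operatorname{End}_k(E)$ of $f$ are exactly the linear maps determined by $$g(f^i(e))=\begin{cases} f^{i-1}(e)+\lambda_i f^{n-1}(e) & \text{if } 1\le i\le n-1,\\ \tilde e & \text{if } i=0,\end{cases}$$ where $\lambda_1,\dots,\lambda_{n-1}\in k$ are arbitrary scalars and $\tilde e\in E$ is an arbitrary vector.
   Context: A generalized inverse of an endomorphism $f$ of $E$ is an endomorphism $g$ of $E$ with $f\circ g\circ f=f$. Here $\{e,f(e),\dots,f^{n-1}(e)\}$ is a basis of $E$. *)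

From HB Require Import structures.
From mathcomp Require Import all_boot all_order all_algebra.
Set Implicit Arguments. Unset Strict Implicit. Unset Printing Implicit Defensive.
Import GRing.Theory.
Local Open Scope ring_scope.

Definition lfun_pow (k : fieldType) (E : vectType k) (f : 'End(E)) (i : nat) : 'End(E) :=
  iter i (fun h => (f \o h)%VF) \1%VF.

Definition lfun_horner (k : fieldType) (E : vectType k) (p : {poly k}) (f : 'End(E)) : 'End(E) :=
  \sum_(i < size p) p`_i *: lfun_pow f i.

Definition lfun_minpoly (k : fieldType) (E : vectType k) (f : 'End(E)) (p : {poly k}) : Prop :=
  [/\ p \is monic, lfun_horner p f = 0 &
      forall q : {poly k}, lfun_horner q f = 0 -> p %| q].

Definition gen_inverse (k : fieldType) (E : vectType k) (f g : 'End(E)) : Prop :=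
  (f \o g \o f)%VF = f.

From HB Require Import structures.
From mathcomp Require Import all_boot all_order all_algebra.
From mathcomp Require Import zify.
Set Implicit Arguments.
Unset Strict Implicit.
Unset Printing Implicit Defensive.

Import GRing.Theory.
Local Open Scope ring_scope.

(* The iterates e, f e, ..., f^(n-1) e are free: applying f^(n-1-j) to a
   vanishing combination isolates its j-th coefficient once the earlier ones
   are known to vanish.  So they form a basis of E.  Moreover f e, ...,
   f^(n-1) e are n-1 free vectors in the image of f, so by rank-nullity the
   kernel of f is the line spanned by f^(n-1) e.  Now f g f = f says that
   g (f x) - x lies in ker f, and it suffices to check this on the basis:
   at x = f^(n-1) e it holds because f x = 0, and g e is never involved. *)

Section Iterates.

Variables (k : fieldType) (E : vectType k).
Implicit Types (f g : 'End(E)) (u v : E).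

Lemma lfun_powE f i v : lfun_pow f i v = iter i f v.
Proof. by elim: i => [|i IHi] /=; rewrite ?id_lfunE ?comp_lfunE ?IHi. Qed.

Lemma lfun_horner_Xn f n : lfun_horner 'X^n f = lfun_pow f n.
Proof.
rewrite /lfun_horner size_polyXn big_ord_recr /= big1 => [|i _].
  by rewrite coefXn eqxx scale1r add0r.
by rewrite coefXn (ltn_eqF (ltn_ord i)) scale0r.
Qed.

Lemma minpoly_Xn_iter f n v : lfun_minpoly f 'X^n -> iter n f v = 0.
Proof.
by case=> _ + _; rewrite lfun_horner_Xn -lfun_powE => ->; rewrite zero_lfunE.
Qed.

Definition krylov f v r : r.-tuple E := [tuple iter i f v | i < r].

Lemma nth_krylov f v r i : (i < r)%N -> (krylov f v r)`_i = iter i f v.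
Proof. by move=> lt_ir; rewrite -[i]/(val (Ordinal lt_ir)) nth_mktuple. Qed.

Lemma iter_lfun_eq0 f v r j : iter r f v = 0 -> (r <= j)%N -> iter j f v = 0.
Proof. by move=> fv0 /subnK <-; rewrite iterD fv0 -lfun_powE linear0. Qed.

Lemma krylov_free f v r :
  iter r f v = 0 -> iter r.-1 f v != 0 -> free (krylov f v r).
Proof.
move=> fv0 fv_neq0; apply/freeP => c sum_c0 [j lt_jr].
elim/ltn_ind: j lt_jr => j IHj lt_jr.
have /(congr1 (lfun_pow f (r.-1 - j))) := sum_c0.
rewrite linear0 linear_sum (bigD1 (Ordinal lt_jr)) //=.
rewrite big1 => [|[i lt_ir] neq_ij].
  rewrite addr0 nth_krylov // linearZ /= lfun_powE -iterD subnK; last by lia.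
  by move/eqP; rewrite scaler_eq0 (negPf fv_neq0) orbF => /eqP.
rewrite nth_krylov // linearZ /= lfun_powE -iterD.
case: (ltngtP i j) => [lt_ij | lt_ji | eq_ij].
- by rewrite IHj ?scale0r.
- by rewrite (iter_lfun_eq0 fv0) ?scaler0 //; lia.
- by rewrite -val_eqE /= eq_ij eqxx in neq_ij.
Qed.

Lemma krylovS f v r : krylov f v r.+1 = v :: krylov f (f v) r :> seq E.
Proof.
rewrite /= enum_ordSl /=; congr (_ :: _); rewrite -map_comp.
by apply: eq_map => i /=; rewrite add0n -iterS iterSr.
Qed.

Lemma krylovP f v r (P : E -> Prop) :
  {in krylov f v r, forall x, P x} <-> forall i, (i < r)%N -> P (iter i f v).
Proof.
split=> [Pf i lt_ir | Pf _ /mapP[i _ ->]]; last exact: Pf.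
by apply: Pf; rewrite -(nth_krylov f v lt_ir) mem_nth ?size_tuple.
Qed.

Lemma gen_inverse_spanP f g (X : seq E) : <<X>>%VS = fullv ->
  gen_inverse f g <-> {in X, forall x, g (f x) - x \in lker f}.
Proof.
move=> spanX; rewrite /gen_inverse (fullv_lfunP _ _ spanX).
by split=> fgf x /fgf; rewrite memv_ker linearB subr_eq0 !comp_lfunE => /eqP.
Qed.

Lemma vline_coefsP (P : pred nat) u (w : nat -> E) :
  (forall i, P i -> w i \in <[u]>%VS) <->
  exists c : nat -> k, forall i, P i -> w i = c i *: u.
Proof.
split=> [wu | [c wc] i /wc ->]; last by rewrite memvZ ?memv_line.
exists (fun i => coord [tuple u] 0 (w i)) => i /wu.
by rewrite -span_seq1 => /coord_span {1}->; rewrite big_ord1.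
Qed.

End Iterates.

Section CyclicNilpotent.

Variables (k : fieldType) (E : vectType k) (f : 'End(E)) (m : nat) (e : E).
Hypotheses (dimE : \dim (fullv : {vspace E}) = m.+1)
  (fe0 : iter m.+1 f e = 0) (fe_neq0 : iter m f e != 0).

Lemma span_krylov : <<krylov f e m.+1>>%VS = fullv.
Proof.
apply/eqP; rewrite eqEdim subvf /= dimE.
by have /eqP-> := krylov_free fe0 fe_neq0; rewrite size_tuple.
Qed.

Lemma lker_cyclic : lker f = <[iter m f e]>%VS.
Proof.
apply/eqP; rewrite eq_sym eqEdim -memvE memv_ker -iterS fe0 eqxx.
rewrite dim_vline fe_neq0 /=.
have free_fe : free (krylov f (f e) m).
  by have := krylov_free fe0 fe_neq0; rewrite krylovS free_cons => /andP[].
have im_fe : (<<krylov f (f e) m>> <= limg f)%VS.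
  apply/span_subvP => _ /mapP[i _ ->].
  by rewrite /= -iterSr iterS memv_img ?memvf.
have := limg_ker_dim f fullv; rewrite capfv dimE.
by have := dimvS im_fe; rewrite (eqP free_fe) size_tuple; lia.
Qed.

End CyclicNilpotent.

Theorem lemma3p7 (k : fieldType) (E : vectType k) (n : nat)
  (hdim : \dim (fullv : {vspace E}) = n)
  (f : 'End(E)) (hmin : lfun_minpoly f 'X^n)
  (e : E) (he : iter n.-1 f e != 0) (g : 'End(E)) :
  gen_inverse f g <->
  exists (lam : nat -> k) (et : E),
    g e = et /\
    (forall i : nat, (1 <= i <= n - 1)%N ->
       g (iter i f e) = iter i.-1 f e + lam i *: iter n.-1 f e).
Proof.
case: n hdim hmin he => [|m] dimE hmin fe_neq0.
  move/eqP: dimE; rewrite dimv_eq0 => /eqP fullv0.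
  by have := memvf e; rewrite fullv0 memv0 (negPf fe_neq0).
have fe0 : iter m.+1 f e = 0 := minpoly_Xn_iter e hmin.
rewrite (gen_inverse_spanP _ _ (span_krylov dimE fe0 fe_neq0)) krylovP.
rewrite (lker_cyclic dimE fe0 fe_neq0) subn1 /=.
transitivity (forall i, (0 < i <= m)%N ->
  g (iter i f e) - iter i.-1 f e \in <[iter m f e]>%VS).
  split=> gfe i.
  - by case: i => // i /ltnW /gfe.
  - rewrite ltnS leq_eqVlt => /orP[/eqP-> | lt_im]; last by rewrite -iterS gfe.
    by rewrite -iterS fe0 linear0 sub0r rpredN memv_line.
rewrite (vline_coefsP (fun i => 0 < i <= m)%N _
  (fun i => g (iter i f e) - iter i.-1 f e)).
split=> [[lam glam] | [lam [_ [_ glam]]]]; [exists lam, (g e) | exists lam];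
  last by move=> i /glam ->; rewrite addrAC subrr add0r.
by split=> // i /glam /eqP; rewrite subr_eq addrC => /eqP.
Qed.
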